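(* Let $n\ge2$ and let $X,Y$ be identically distributed random variables taking values in $\{x_1,\dots,x_n\}$ with $x_1<\dots<x_n$, each value with positive probability. Let $P=(p_{ij})_{n\times n}$ with $p_{ij}=\mathbb P(X=x_i,Y=x_j)$, $\mathbf p=P\mathbf 1_n=(p_1,\dots,p_n)^\top$ and $D=\mathrm{diag}(\mathbf p)$. Then for $r\in[-1,1]$, $(X,Y)\in\mathrm{IC}_r$ if and only if $$\frac{P+P^\top}{2}=rD+(1-r)\mathbf p\mathbf p^\top.$$ Furthermore, in this case $\underline r_{\mathbf p}\le r\le1$, where $$\underline r_{\mathbf p}=\max\Big(\max_{j\in[n]}\Big(-\frac{p_j}{1-p_j}\Big),\ \max_{i,j\in[n],\,i\ne j}\Big(1-\frac1{p_ip_j}\Big)\Big).$$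
   Context: $(X,Y)\in\mathrm{IC}_r$ means $\mathrm{Corr}(X,Y)=\mathrm{Corr}(g(X),g(Y))=r$ for every measurable $g:\mathbb R\to\mathbb R$ such that $g(X),g(Y)$ are non-degenerate with finite variance. (Equivalently the condition says $(X,Y)$ is quasi-$r$-Fréchet.) *)

From HB Require Import structures.
From mathcomp Require Import all_boot all_order all_algebra.
From mathcomp Require Import all_classical all_reals all_analysis.
Set Implicit Arguments. Unset Strict Implicit. Unset Printing Implicit Defensive.
Import Order.TTheory GRing.Theory Num.Theory.
Local Open Scope classical_set_scope.
Local Open Scope ring_scope.

Section Defs.
Context {R : realType} {d : measure_display} {T : measurableType d}
  (P : probability T R).

Definition corr (U V : T -> R) : R :=
  fine (covariance P U V) / Num.sqrt (fine ('V_P[U]) * fine ('V_P[V])).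

Definition finite_variance (U : T -> R) : Prop := U \in Lfun P 2%:E.

Definition nondegenerate (U : T -> R) : Prop := (0 < 'V_P[U])%E.

Definition IC (X Y : T -> R) (r : R) : Prop :=
  corr X Y = r /\
  forall g : R -> R, measurable_fun setT g ->
    finite_variance (g \o X) -> finite_variance (g \o Y) ->
    nondegenerate (g \o X) -> nondegenerate (g \o Y) ->
    corr (g \o X) (g \o Y) = r.

Definition jointM (n : nat) (x : 'I_n -> R) (X Y : T -> R) : 'M[R]_n :=
  \matrix_(i, j) fine (P (X @^-1` [set x i] `&` Y @^-1` [set x j])).

Definition margvec (n : nat) (x : 'I_n -> R) (X Y : T -> R) : 'cV[R]_n :=
  jointM x X Y *m const_mx 1.
End Defs.

Definition seqmax {R : realType} (s : seq R) : R := foldr Num.max (head 0 s) s.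

Definition rlow {R : realType} (n : nat) (p : 'I_n -> R) : R :=
  Num.max
    (seqmax [seq - (p j / (1 - p j)) | j <- enum 'I_n])
    (seqmax [seq 1 - (p ij.1 * p ij.2)^-1 |
              ij <- [seq (i, j) | i <- enum 'I_n, j <- enum 'I_n] & ij.1 != ij.2]).

From Pilot Require Import Defs.
From HB Require Import structures.
From mathcomp Require Import all_boot all_order all_algebra.
From mathcomp Require Import all_classical all_reals all_analysis.
From mathcomp Require Import ring lra.
Set Implicit Arguments.
Unset Strict Implicit.
Unset Printing Implicit Defensive.

Import Order.TTheory GRing.Theory Num.Theory.
Local Open Scope classical_set_scope.
Local Open Scope ring_scope.

(* Since X and Y take the values x_i, g(X) and g(Y) only depend on the vector
   a = (g x_i)_i, and every vector a arises from a measurable g.  With p the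
   common marginal and D = diag p,
     Var g(X) = Var g(Y) = a^T D a - (p.a)^2,   Cov(g(X), g(Y)) = a^T P a - (p.a)^2,
   so Cov - r Var is the quadratic form of M = (P + P^T)/2 - r D - (1 - r) p p^T
   at a.  Hence (X, Y) is in IC_r iff this form vanishes at every non-constant a
   (exactly the a with Var > 0), i.e. iff the symmetric matrix M is zero, as the
   vectors e_k and e_k - e_l show.  The bounds on r are read off M = 0: on the
   diagonal 0 <= p_jj = p_j (r + (1 - r) p_j), off the diagonal
   (1 - r) p_i p_j = (p_ij + p_ji) / 2 <= 1. *)


Lemma exists_neq_ord n (k : 'I_n) : (1 < n)%N -> exists l : 'I_n, l != k.
Proof.
move=> n_gt1; have /card_gt0P[l lk] : (0 < #|predC1 k|)%N.
  by rewrite cardC1 card_ord -subn1 subn_gt0.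
by exists l.
Qed.

Lemma sum_delta (R : pzSemiRingType) n (f : 'I_n -> R) k :
  \sum_i (i == k)%:R * f i = f k.
Proof. by rewrite (bigD1 k) //= eqxx mul1r big1 ?addr0 // => i /negbTE->; rewrite mul0r. Qed.

Section BilinearForm.
Variables (R : numFieldType) (n : nat).
Implicit Types (M N : 'M[R]_n) (a b c : 'I_n -> R).

Definition bform M a b := \sum_i \sum_j a i * b j * M i j.
Definition qform M a := bform M a a.

Lemma bformBl M a b c : bform M (a \- b) c = bform M a c - bform M b c.
Proof.
rewrite /bform -sumrB; apply: eq_bigr => i _; rewrite -sumrB.
by apply: eq_bigr => j _ /=; rewrite !mulrBl.
Qed.

Lemma bformBr M a b c : bform M a (b \- c) = bform M a b - bform M a c.
Proof.
rewrite /bform -sumrB; apply: eq_bigr => i _; rewrite -sumrB.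
by apply: eq_bigr => j _ /=; rewrite mulrBr mulrBl.
Qed.

Lemma bform_cstl M (k : R) b : bform M (cst k) b = k * \sum_j b j * \sum_i M i j.
Proof.
rewrite /bform exchange_big mulr_sumr; apply: eq_bigr => j _.
by rewrite !mulr_sumr; apply: eq_bigr => i _ /=; ring.
Qed.

Lemma bform_cstr M a (k : R) : bform M a (cst k) = k * \sum_i a i * \sum_j M i j.
Proof.
rewrite /bform mulr_sumr; apply: eq_bigr => i _.
by rewrite !mulr_sumr; apply: eq_bigr => j _ /=; ring.
Qed.

Lemma bform_delta M k l :
  bform M (fun i => (i == k)%:R) (fun j => (j == l)%:R) = M k l.
Proof.
rewrite /bform (bigD1 k) //= [X in _ + X]big1 ?addr0; last first.
  by move=> i /negbTE ik; rewrite big1 // => j _; rewrite ik !mul0r.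
rewrite (bigD1 l) //= [X in _ + X]big1 ?addr0; last first.
  by move=> j /negbTE jl; rewrite jl mulr0 mul0r.
by rewrite !eqxx !mul1r.
Qed.

Lemma qformD M N a : qform (M + N) a = qform M a + qform N a.
Proof.
rewrite /qform /bform -big_split; apply: eq_bigr => i _.
by rewrite -big_split; apply: eq_bigr => j _; rewrite mxE mulrDr.
Qed.

Lemma qformN M a : qform (- M) a = - qform M a.
Proof.
rewrite /qform /bform -sumrN; apply: eq_bigr => i _.
by rewrite -sumrN; apply: eq_bigr => j _; rewrite mxE mulrN.
Qed.

Lemma qformZ (k : R) M a : qform (k *: M) a = k * qform M a.
Proof.
rewrite /qform /bform mulr_sumr; apply: eq_bigr => i _.
by rewrite mulr_sumr; apply: eq_bigr => j _; rewrite mxE mulrCA.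
Qed.

Lemma qform_tr M a : qform M^T a = qform M a.
Proof.
rewrite /qform /bform exchange_big; apply: eq_bigr => i _.
by apply: eq_bigr => j _; rewrite mxE [a j * _]mulrC.
Qed.

Lemma qform_diag_mx (d : 'rV[R]_n) a : qform (diag_mx d) a = \sum_i a i ^+ 2 * d 0 i.
Proof.
apply: eq_bigr => i _; rewrite (bigD1 i) //= big1 ?addr0 => [|j ji].
  by rewrite mxE eqxx mulr1n expr2.
by rewrite mxE eq_sym (negbTE ji) mulr0n mulr0.
Qed.

Lemma qform_mul_tr (u : 'cV[R]_n) a : qform (u *m u^T) a = (\sum_i a i * u i 0) ^+ 2.
Proof.
rewrite expr2 big_distrlr /=; apply: eq_bigr => i _; apply: eq_bigr => j _.
by rewrite !mxE big_ord1 mxE mulrACA.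
Qed.

Lemma qform_eq0 M : (1 < n)%N -> M^T = M ->
  (forall a, (exists k l, a k != a l) -> qform M a = 0) -> M = 0.
Proof.
move=> n_gt1 M_sym Q0.
have M_diag0 k : M k k = 0.
  have [l lk] := exists_neq_ord k n_gt1.
  rewrite -bform_delta; apply: Q0; exists k, l.
  by rewrite eqxx (negbTE lk) oner_neq0.
apply/matrixP => k l; rewrite mxE; have [<-//|lk] := eqVneq l k.
pose e i : R := (i == k)%:R - (i == l)%:R.
have : qform M e = 0.
  apply: Q0; exists k, l; rewrite /e !eqxx (negbTE lk) [k == l]eq_sym (negbTE lk) subr0 sub0r.
  by rewrite -subr_eq0 opprK -mulr2n pnatr_eq0.
rewrite /qform (bformBl _ (fun i => (i == k)%:R)) !bformBr !bform_delta !M_diag0.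
have -> : M l k = M k l by rewrite -[in LHS]M_sym mxE.
rewrite sub0r subr0 => /eqP.
by rewrite -opprD oppr_eq0 -mulr2n -mulr_natl mulf_eq0 pnatr_eq0 => /eqP.
Qed.

End BilinearForm.

Section JointMatrix.
Variables (R : realFieldType) (n : nat) (J : 'M[R]_n).
Implicit Types (a : 'I_n -> R) (r : R).

Definition margv : 'cV[R]_n := J *m const_mx 1.
Definition marg i := margv i 0.
(* Moments of a(I) and a(I') for a pair of indices (I, I') with joint law J. *)
Definition jmean a := \sum_i a i * marg i.
Definition jvar a := \sum_i (a i - jmean a) ^+ 2 * marg i.
Definition jcov a := qform J (a \- cst (jmean a)).

Definition ic_defect r : 'M[R]_n :=
  2^-1 *: (J + J^T) - (r *: diag_mx margv^T + (1 - r) *: (margv *m margv^T)).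

Lemma margE i : marg i = \sum_j J i j.
Proof. by rewrite /marg /margv mxE; apply: eq_bigr => j _; rewrite mxE mulr1. Qed.

Lemma ic_defect_eq0 r : ic_defect r = 0 <->
  2^-1 *: (J + J^T) = r *: diag_mx margv^T + (1 - r) *: (margv *m margv^T).
Proof. by split=> [/eqP|E]; [rewrite subr_eq0 => /eqP | rewrite /ic_defect E subrr]. Qed.

Lemma ic_defectE r i j : ic_defect r i j =
  2^-1 * (J i j + J j i) - (r * (marg i *+ (i == j)) + (1 - r) * (marg i * marg j)).
Proof. by rewrite /marg /margv !mxE big_ord1 !mxE. Qed.

Lemma ic_defect_tr r : (ic_defect r)^T = ic_defect r.
Proof.
apply/matrixP => i j; rewrite mxE !ic_defectE [J j i + _]addrC [marg j * _]mulrC.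
by have [->|ij] := eqVneq i j; rewrite ?eqxx // eq_sym (negbTE ij).
Qed.

Hypothesis col_marg : forall j, \sum_i J i j = marg j.
Hypothesis marg_sum1 : \sum_i marg i = 1.

Lemma jmean_rows a : \sum_i a i * \sum_j J i j = jmean a.
Proof. by apply: eq_bigr => i _; rewrite margE. Qed.

Lemma jmean_cols a : \sum_j a j * \sum_i J i j = jmean a.
Proof. by apply: eq_bigr => j _; rewrite col_marg. Qed.

Lemma jmean_cst k : jmean (cst k) = k.
Proof. by rewrite /jmean -mulr_sumr marg_sum1 mulr1. Qed.

Lemma jcovE a : jcov a = qform J a - jmean a ^+ 2.
Proof.
rewrite /jcov /qform bformBl !bformBr !bform_cstl !bform_cstr.
by rewrite jmean_rows !jmean_cols jmean_cst; ring.
Qed.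

Lemma jvarE a : jvar a = \sum_i a i ^+ 2 * marg i - jmean a ^+ 2.
Proof.
have -> : jvar a = \sum_i a i ^+ 2 * marg i - jmean a *+ 2 * \sum_i a i * marg i
                   + jmean a ^+ 2 * \sum_i marg i.
  by rewrite /jvar !mulr_sumr -sumrB -big_split; apply: eq_bigr => i _ /=; ring.
by rewrite -/(jmean a) marg_sum1; ring.
Qed.

Lemma cov_sub_var r a : jcov a - r * jvar a = qform (ic_defect r) a.
Proof.
rewrite /ic_defect !(qformD, qformN, qformZ) qform_tr qform_diag_mx qform_mul_tr.
under eq_bigr do rewrite mxE.
rewrite -/(jmean a) jcovE jvarE.
by field.
Qed.

End JointMatrix.

Lemma jvar_gt0 (R : realFieldType) n (J : 'M[R]_n) (a : 'I_n -> R) k l :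
  (forall i, 0 < marg J i) -> a k != a l -> 0 < jvar J a.
Proof.
move=> marg_gt0 akl; have term_ge0 i : 0 <= (a i - jmean J a) ^+ 2 * marg J i.
  by rewrite mulr_ge0 ?sqr_ge0 ?ltW.
rewrite lt_def sumr_ge0 // andbT; apply: contra akl => /eqP /psumr_eq0P var0.
have a_cst i : a i = jmean J a.
  move/eqP: (var0 (fun i _ => term_ge0 i) i isT).
  by rewrite mulf_eq0 (gt_eqF (marg_gt0 i)) orbF sqrf_eq0 subr_eq0 => /eqP.
by rewrite !a_cst.
Qed.

Lemma seqmax_le (R : realType) (s : seq R) (y z : R) :
  z \in s -> {in s, forall w, w <= y} -> seqmax s <= y.
Proof.
move=> zs sy; rewrite /seqmax foldrE big_seq_cond; apply: bigmax_le => [|w /andP[ws _]].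
  by case: s zs sy => [//|w s] _ sy; apply: sy; rewrite mem_head.
exact: sy.
Qed.

Section LowerBound.
Variables (R : realType) (n : nat) (J : 'M[R]_n) (r : R).
Hypotheses (n_gt1 : (1 < n)%N) (J_ge0 : forall i j, 0 <= J i j).
Hypotheses (marg_gt0 : forall i, 0 < marg J i) (marg_sum1 : \sum_i marg J i = 1).
Hypothesis defect0 : ic_defect J r = 0.

Lemma entry_le_marg i j : J i j <= marg J i.
Proof. by rewrite margE (bigD1 j) //= lerDl sumr_ge0. Qed.

Lemma marg_lt1 k : marg J k < 1.
Proof.
have [l lk] := exists_neq_ord k n_gt1.
rewrite -marg_sum1 (bigD1 k) //= ltrDl (bigD1 l) //= ltr_pwDl ?sumr_ge0 // => i _.
exact: ltW.
Qed.

Lemma ic_defect0_diag_bound k : - (marg J k / (1 - marg J k)) <= r.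
Proof.
set p := marg J k; have p_gt0 : 0 < p := marg_gt0 k; have p_lt1 : p < 1 := marg_lt1 k.
have : 0 <= p * (r + (1 - r) * p).
  have := ic_defectE J r k k; rewrite defect0 mxE eqxx mulr1n -/p.
  by have := J_ge0 k k; lra.
rewrite pmulr_rge0 // => h.
by rewrite -mulNr ler_pdivrMr ?subr_gt0 //; lra.
Qed.

Lemma ic_defect0_offdiag_bound k l : k != l -> 1 - (marg J k * marg J l)^-1 <= r.
Proof.
move=> kl; have pp_gt0 : 0 < marg J k * marg J l by rewrite mulr_gt0.
have : (1 - r) * (marg J k * marg J l) <= 1.
  have := ic_defectE J r k l; rewrite defect0 mxE (negbTE kl) mulr0n mulr0 add0r.
  have := entry_le_marg k l; have := entry_le_marg l k.
  have := marg_lt1 k; have := marg_lt1 l; lra.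
by rewrite -ler_pdivlMr // mul1r; lra.
Qed.

Lemma rlow_le : rlow (marg J) <= r.
Proof.
pose k0 : 'I_n := Ordinal n_gt1; have [l lk] := exists_neq_ord k0 n_gt1.
rewrite ge_max; apply/andP; split.
  apply: (@seqmax_le _ _ _ (- (marg J l / (1 - marg J l)))); first exact/map_f/mem_enum.
  by move=> _ /mapP[k _ ->]; exact: ic_defect0_diag_bound.
apply: (@seqmax_le _ _ _ (1 - (marg J l * marg J k0)^-1)).
  apply/mapP; exists (l, k0) => //.
  by rewrite mem_filter lk; apply: allpairs_f; rewrite mem_enum.
move=> _ /mapP[[k k'] + ->]; rewrite mem_filter => /andP[/= kk' _].
exact: ic_defect0_offdiag_bound.
Qed.

End LowerBound.

Lemma Lfun_indic d (T : measurableType d) (R : realType)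
    (mu : {finite_measure set T -> \bar R}) (A : set T) (p : R) :
  measurable A -> 0 < p -> (\1_A : T -> R) \in Lfun mu p%:E.
Proof.
move=> mA p_gt0; rewrite inE/=; apply/andP; split; rewrite inE/=.
  exact: measurable_realfun.measurable_indic.
rewrite /finite_norm unlock poweR_lty //.
have -> : (\int[mu]_t `|(EFin \o \1_A) t| `^ p = \int[mu]_t (\1_A t)%:E)%E.
  apply: eq_integral => t _ /=; rewrite indicE.
  by case: (t \in A); rewrite /= ?normr1 ?powR1 // normr0 powR0 ?gt_eqF.
by rewrite integral_indic // setIT ltey_eq fin_num_measure.
Qed.

Lemma measurable_interpolant (R : realType) n (x : 'I_n -> R) (a : 'I_n -> R) :
  injective x -> exists2 g : R -> R, measurable_fun setT g & forall i, g (x i) = a i.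
Proof.
move=> x_inj; exists (fun y => \sum_i a i * \1_[set x i] y).
  by apply: measurable_sum => i; exact: measurable_realfun.measurable_funM.
move=> k; rewrite -(sum_delta a k); apply: eq_bigr => i _.
rewrite mulrC indicE; congr (_%:R * _).
congr nat_of_bool; rewrite eq_sym -(inj_eq x_inj).
by apply/idP/idP => [/set_mem ->|/eqP ->] //; exact: mem_set.
Qed.

Section FiniteValuedPair.
Variables (R : realType) (d : measure_display) (T : measurableType d).
Variables (P : probability T R) (n : nat) (x : 'I_n -> R) (X Y : {RV P >-> R}).
Hypothesis x_inj : injective x.
Hypothesis X_vals : forall t, exists i, X t = x i.
Hypothesis Y_vals : forall t, exists i, Y t = x i.

Local Notation J := (jointM P x X Y).

Definition cell i j := X @^-1` [set x i] `&` Y @^-1` [set x j].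

Lemma measurable_cell i j : measurable (cell i j).
Proof. by apply: measurableI; apply: measurable_funPTI; exact: measurable_set1. Qed.

Lemma pair_fun_indic_sum (h : R -> R -> R) :
  (fun t => h (X t) (Y t))
  = \sum_(ij : 'I_n * 'I_n) h (x ij.1) (x ij.2) \o* \1_(cell ij.1 ij.2).
Proof.
apply/funext => t; have [i Xt] := X_vals t; have [j Yt] := Y_vals t.
rewrite fct_sumE (bigD1 (i, j)) //= big1 ?addr0 => [|[k l] /= kl].
  by rewrite indicE mem_set ?mul1r ?Xt ?Yt //; split.
rewrite indicE memNset ?mul0r // => -[/= Xk Yl]; move: kl.
by rewrite (x_inj (etrans (esym Xk) Xt)) (x_inj (etrans (esym Yl) Yt)) eqxx.
Qed.

Lemma Lfun_pair_fun (F : T -> R) (h : R -> R -> R) (p : R) : 1 <= p ->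
  F =1 (fun t => h (X t) (Y t)) -> F \in Lfun P p%:E.
Proof.
move=> p_ge1 /funext->; rewrite pair_fun_indic_sum; apply: rpred_sum => ij _.
apply: Lfun_scale => //; apply: Lfun_indic; first exact: measurable_cell.
exact: lt_le_trans p_ge1.
Qed.

Lemma expectation_pair_fun (F : T -> R) (h : R -> R -> R) :
  F =1 (fun t => h (X t) (Y t)) ->
  ('E_P[F] = (\sum_i \sum_j h (x i) (x j) * J i j)%:E)%E.
Proof.
move=> /funext->; rewrite pair_fun_indic_sum.
pose G ij : T -> R := h (x ij.1) (x ij.2) \o* \1_(cell ij.1 ij.2).
have -> : \sum_ij G ij = \sum_(f <- [seq G ij | ij <- index_enum ('I_n * 'I_n)%type]) f.
  by rewrite big_map.
rewrite expectation_sum; last first.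
  move=> _ /mapP[ij _ ->]; apply: Lfun_scale => //.
  by apply: Lfun_indic; [exact: measurable_cell | exact: ltr01].
rewrite big_map pair_big /= -sumEFin; apply: eq_bigr => ij _.
have cell_L1 : \1_(cell ij.1 ij.2) \in Lfun P 1.
  by apply: Lfun_indic; [exact: measurable_cell | exact: ltr01].
rewrite expectationZl // expectation_indic; last exact: measurable_cell.
by rewrite mxE EFinM fineK // fin_num_measure //; exact: measurable_cell.
Qed.

Lemma jointM_ge0 i j : 0 <= J i j.
Proof. by rewrite mxE fine_ge0 // measure_ge0. Qed.

Lemma expectation_fun_X (F : T -> R) (g : R -> R) :
  F =1 (fun t => g (X t)) -> ('E_P[F] = (jmean J (g \o x))%:E)%E.
Proof.
move=> FE; rewrite (expectation_pair_fun (h := fun u _ => g u)) // -jmean_rows.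
by congr (_%:E); apply: eq_bigr => i _; rewrite mulr_sumr.
Qed.

Lemma expectation_comp_X g : ('E_P[g \o X] = (jmean J (g \o x))%:E)%E.
Proof. exact: expectation_fun_X. Qed.

Lemma expectation_fun_Y (F : T -> R) (g : R -> R) :
  F =1 (fun t => g (Y t)) -> ('E_P[F] = (\sum_j g (x j) * \sum_i J i j)%:E)%E.
Proof.
move=> FE; rewrite (expectation_pair_fun (h := fun _ v => g v)) // exchange_big.
by congr (_%:E); apply: eq_bigr => j _; rewrite mulr_sumr.
Qed.

Lemma jointM_marg_sum : \sum_i marg J i = 1.
Proof.
have := expectation_fun_X (g := fun=> 1) (F := cst 1) (fun=> erefl).
rewrite expectation_cst /jmean => -[->].
by apply: eq_bigr => i _; rewrite mul1r.
Qed.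

Lemma prob_X_eq k : P (X @^-1` [set x k]) = (marg J k)%:E.
Proof.
rewrite -expectation_indic; last exact: measurable_funPTI (measurable_set1 _).
rewrite (expectation_fun_X (g := fun u => (u == x k)%:R)) => [|t].
  rewrite /jmean -(sum_delta (marg J) k); congr (_%:E); apply: eq_bigr => i _.
  by rewrite /= (inj_eq x_inj) mulrC.
by rewrite indicE /=; congr (_%:R); congr nat_of_bool; apply/idP/eqP => [/set_mem|/mem_set].
Qed.

Lemma prob_Y_eq k : P (Y @^-1` [set x k]) = (\sum_i J i k)%:E.
Proof.
rewrite -expectation_indic; last exact: measurable_funPTI (measurable_set1 _).
rewrite (expectation_fun_Y (g := fun u => (u == x k)%:R)) => [|t].
  rewrite -(sum_delta (fun j => \sum_i J i j) k); congr (_%:E); apply: eq_bigr => j _.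
  by rewrite /= (inj_eq x_inj).
by rewrite indicE /=; congr (_%:R); congr nat_of_bool; apply/idP/eqP => [/set_mem|/mem_set].
Qed.

Hypothesis XY_ident : forall A : set R, measurable A ->
  distribution P X A = distribution P Y A.

Lemma jointM_col_marg k : \sum_i J i k = marg J k.
Proof.
have := XY_ident (measurable_set1 (x k)); rewrite /distribution /pushforward.
by rewrite prob_X_eq prob_Y_eq => -[].
Qed.

Lemma expectation_comp_Y g : ('E_P[g \o Y] = (jmean J (g \o x))%:E)%E.
Proof. by rewrite (expectation_fun_Y (g := g)) // jmean_cols //; exact: jointM_col_marg. Qed.

Lemma covariance_comp g : covariance P (g \o X) (g \o Y) = (jcov J (g \o x))%:E.
Proof.
rewrite unlock expectation_comp_X expectation_comp_Y /=.
set m := jmean J (g \o x).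
by rewrite (expectation_pair_fun (h := fun u v => (g u - m) * (g v - m))).
Qed.

Lemma variance_comp_X g : 'V_P[g \o X] = (jvar J (g \o x))%:E.
Proof.
rewrite /variance unlock expectation_comp_X /=.
set m := jmean J (g \o x).
by rewrite (expectation_fun_X (g := fun u => (g u - m) ^+ 2)) // => t /=; rewrite expr2.
Qed.

Lemma variance_comp_Y g : 'V_P[g \o Y] = (jvar J (g \o x))%:E.
Proof.
rewrite /variance unlock expectation_comp_Y /=.
set m := jmean J (g \o x).
rewrite (expectation_fun_Y (g := fun u => (g u - m) ^+ 2)) => [|t /=].
  by rewrite jmean_cols //; exact: jointM_col_marg.
by rewrite expr2.
Qed.

Lemma corr_comp g : corr P (g \o X) (g \o Y) = jcov J (g \o x) / jvar J (g \o x).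
Proof.
have := variance_ge0 P (g \o X); rewrite variance_comp_X lee_fin => var_ge0.
by rewrite /corr covariance_comp variance_comp_X variance_comp_Y -expr2 sqrtr_sqr ger0_norm.
Qed.

Lemma finite_variance_comp_X g : finite_variance P (g \o X).
Proof. by apply: (@Lfun_pair_fun _ (fun u _ => g u)); rewrite ?ler1n. Qed.

Lemma finite_variance_comp_Y g : finite_variance P (g \o Y).
Proof. by apply: (@Lfun_pair_fun _ (fun _ v => g v)); rewrite ?ler1n. Qed.

Lemma corr_comp_eq g r : 0 < jvar J (g \o x) ->
  corr P (g \o X) (g \o Y) = r <-> qform (ic_defect J r) (g \o x) = 0.
Proof.
move=> var_gt0; rewrite corr_comp -cov_sub_var ?jointM_marg_sum //; last exact: jointM_col_marg.
split=> [<-|/eqP]; first by rewrite divfK ?gt_eqF // subrr.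
by rewrite subr_eq0 => /eqP->; rewrite mulfK ?gt_eqF.
Qed.

Hypothesis n_gt1 : (1 < n)%N.
Hypothesis PX_gt0 : forall i, (0 < P (X @^-1` [set x i]))%E.

Lemma jointM_marg_gt0 i : 0 < marg J i.
Proof. by rewrite -lte_fin -prob_X_eq. Qed.

Lemma nondegenerate_comp_X g : Defs.nondegenerate P (g \o X) <-> 0 < jvar J (g \o x).
Proof. by rewrite /Defs.nondegenerate variance_comp_X lte_fin. Qed.

Lemma nondegenerate_comp_Y g : Defs.nondegenerate P (g \o Y) <-> 0 < jvar J (g \o x).
Proof. by rewrite /Defs.nondegenerate variance_comp_Y lte_fin. Qed.

Lemma IC_iff_ic_defect0 r : IC P X Y r <-> ic_defect J r = 0.
Proof.
split=> [[_ IC_g] | defect0].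
  apply: qform_eq0 n_gt1 (ic_defect_tr _ _) _ => a [k [l akl]].
  have [g mg gx] := measurable_interpolant a x_inj.
  have -> : a = g \o x by apply/funext => i /=; rewrite gx.
  have var_gt0 : 0 < jvar J (g \o x).
    by apply: (jvar_gt0 (k := k) (l := l) jointM_marg_gt0); rewrite /= !gx.
  apply/(corr_comp_eq _ var_gt0)/IC_g => //.
  - exact: finite_variance_comp_X.
  - exact: finite_variance_comp_Y.
  - exact/nondegenerate_comp_X.
  - exact/nondegenerate_comp_Y.
have corr_r g : 0 < jvar J (g \o x) -> corr P (g \o X) (g \o Y) = r.
  move=> var_gt0; apply/(corr_comp_eq _ var_gt0); rewrite defect0.
  by apply: big1 => i _; apply: big1 => j _; rewrite mxE mulr0.
split=> [|g _ _ _ /nondegenerate_comp_X var_gt0 _]; last exact: corr_r.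
pose k0 : 'I_n := Ordinal n_gt1; have [l lk0] := exists_neq_ord k0 n_gt1.
apply: (corr_r idfun); apply: (jvar_gt0 (k := l) (l := k0) jointM_marg_gt0).
by rewrite /= (inj_eq x_inj).
Qed.

End FiniteValuedPair.

Theorem proposition6 (R : realType) (d : measure_display) (T : measurableType d)
  (P : probability T R) (n : nat) (hn : (2 <= n)%N)
  (x : 'I_n -> R) (hx : forall i j : 'I_n, (i < j)%N -> x i < x j)
  (X Y : {RV P >-> R})
  (hXv : forall t, exists i, X t = x i) (hYv : forall t, exists i, Y t = x i)
  (hid : forall A : set R, measurable A ->
           distribution P X A = distribution P Y A)
  (hpos : forall i, (0 < P (X @^-1` [set x i]))%E)
  (r : R) (hr : -1 <= r <= 1) :
  (IC P X Y r <->
     2^-1 *: (jointM P x X Y + (jointM P x X Y)^T)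
     = r *: diag_mx (margvec P x X Y)^T
       + (1 - r) *: (margvec P x X Y *m (margvec P x X Y)^T))
  /\ (IC P X Y r -> rlow (fun i => margvec P x X Y i 0) <= r <= 1).
Proof.
have x_inj : injective x.
  move=> i j xij; apply: val_inj.
  by case: (ltngtP i j) => // /hx; rewrite xij ltxx.
have IC_iff := IC_iff_ic_defect0 x_inj hXv hYv hid hn hpos r.
split.
  by split=> [/IC_iff/ic_defect_eq0 | /ic_defect_eq0/IC_iff].
move=> /IC_iff defect0; apply/andP; split; last by case/andP: hr.
apply: (rlow_le hn _ _ _ defect0).
- exact: jointM_ge0.
- exact: jointM_marg_gt0.
- exact: jointM_marg_sum.
Qed.
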